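(* For $B=\{x,y\}$ the equivalence relation $\equiv_{\textsc{MaxCut},B}$ restricted to $B$-boundaried graphs $G_B$ with $G-B$ edgeless has infinitely many equivalence classes; consequently, the parameterized problem \textsc{Maximum Cut}[vc] does not admit a boundaried kernelization (of any computable size $f$).
   Context: A boundaried graph $G_B$ is a finite simple graph $G$ together with a set $B\subseteq V(G)$ (the boundary). For boundaried graphs $G_B$ and $H_C$ with $V(G)\cap V(H)\subseteq B\cap C$, the gluing $G_B\oplus H_C$ is the simple graph obtained from the disjoint union of $G$ and $H$ by identifying each vertex of $B\cap C$ in $G$ with the identically named vertex in $H$ (an edge present in both is kept once). For an isomorphism-invariant optimization problem $\Pi$ on graphs with optimum value $\mathrm{OPT}_\Pi(G)$, two $B$-boundaried graphs $G_B,G'_B$ are gluing equivalent w.r.t. $\Pi$ and $B$, written $G_B\equiv_{\Pi,B}G'_B$, if there is $\Delta\in\mathbb{Z}$ with $\mathrm{OPT}_\Pi(G_B\oplus H_B)=\mathrm{OPT}_\Pi(G'_B\oplus H_B)+\Delta$ for every boundaried graph $H_B$. For a pure graph minimization problem $\rho$, a $\rho$-solution of $G$ is a feasible solution $s$ with value $\rho(G,s)$. For computable $f$, a boundaried kernelization of size $f$ for $\Pi[\rho]$ is a polynomial-time algorithm that, given a boundaried graph $G_B$ and a $\rho$-solution $s$ of $G$, outputs a boundaried graph $G'_B$ with $G_B\equiv_{\Pi,B}G'_B$, a $\rho$-solution $s'$ of $G'$ with $|G'|,|s'|,\rho(G',s')\le f(|B|+\rho(G,s))$ (encoding sizes), and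 an integer $\Delta$ with $\mathrm{OPT}_\Pi(G_B\oplus H_B)=\mathrm{OPT}_\Pi(G'_B\oplus H_B)+\Delta$ for all $H_B$. \textsc{Maximum Cut} is the maximization problem whose feasible solutions on $G$ are partitions $V(G)=X\,\dot\cup\,Y$, with value the number of edges with one endpoint in $X$ and one in $Y$. \textsc{Vertex Cover} (vc) is the minimization problem with feasible solutions $S\subseteq V(G)$ such that $G-S$ is edgeless, value $|S|$; \textsc{Maximum Cut}[vc] means $\rho=$ \textsc{Vertex Cover}. *)

From HB Require Import structures.
From mathcomp Require Import all_boot all_order all_algebra.
From mathcomp Require Import finmap.
Set Implicit Arguments. Unset Strict Implicit. Unset Printing Implicit Defensive.
Local Open Scope fset_scope.

Record graph := Graph { gV : {fset nat}; gadj : rel nat }.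

Definition wf_graph (G : graph) : Prop :=
  [/\ forall u v, gadj G u v = gadj G v u,
      forall u, ~~ gadj G u u &
      forall u v, gadj G u v -> (u \in gV G) && (v \in gV G)].

Definition bgraph (B : {fset nat}) (G : graph) : Prop :=
  wf_graph G /\ B `<=` gV G.

(* gluing G_B (+) H_C: union of vertex sets (identical names identified),
   union of edge sets (common edges kept once). *)
Definition glue (G H : graph) : graph :=
  Graph (gV G `|` gV H) (fun u v => gadj G u v || gadj H u v).

Definition glue_ok (B C : {fset nat}) (G H : graph) : Prop :=
  gV G `&` gV H `<=` B `&` C.

Definition cut_value (G : graph) (X : {fset nat}) : nat :=
  \sum_(u <- X) \sum_(v <- gV G `\` X) gadj G u v.

Definition maxcut (G : graph) : nat :=
  \max_(X <- fpowerset (gV G)) cut_value G X.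

Definition glue_equiv (B : {fset nat}) (G G' : graph) : Prop :=
  exists Delta : int, forall H : graph,
    bgraph B H -> glue_ok B B G H -> glue_ok B B G' H ->
    (Posz (maxcut (glue G H)) = Posz (maxcut (glue G' H)) + Delta)%R.

Definition is_vc (G : graph) (S : {fset nat}) : Prop :=
  S `<=` gV G /\ forall u v, gadj G u v -> (u \in S) || (v \in S).

Definition edgeless_outside (B : {fset nat}) (G : graph) : Prop :=
  forall u v, gadj G u v -> (u \in B) || (v \in B).

(* A boundaried kernelization of size f for MaxCut[vc], as a plain function
   (the polynomial-time requirement is dropped); the size of the
   output graph is measured by its number of vertices. *)
Definition bd_kernel (f : nat -> nat)
    (K : {fset nat} -> graph -> {fset nat} -> graph * {fset nat} * int) : Prop :=
  forall (B : {fset nat}) (G : graph) (s : {fset nat}),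
    bgraph B G -> is_vc G s ->
    let: (G', s', Delta) := K B G s in
    [/\ bgraph B G', is_vc G' s',
        #|` gV G'| <= f (#|` B| + #|` s|)%N,
        #|` s'| <= f (#|` B| + #|` s|)%N &
        forall H : graph, bgraph B H -> glue_ok B B G H -> glue_ok B B G' H ->
          (Posz (maxcut (glue G H)) = Posz (maxcut (glue G' H)) + Delta)%R].

From mathcomp Require Import all_boot all_order all_algebra.
From mathcomp Require Import finmap zify.
Set Implicit Arguments. Unset Strict Implicit. Unset Printing Implicit Defensive.
Local Open Scope fset_scope.
Local Open Scope nat_scope.

(* Let K2 i be the complete bipartite graph with parts {x, y} and i fresh leaves, and let
   theta m k consist of k internally disjoint x-y paths of length 3 on fresh vertices.
   Gluing theta m i onto K2 i gives i 5-cycles through x and y, so its maximum cut exceeds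
   that of K2 i glued with theta m 0 = {x, y} by at most 2i.  In any graph containing x
   and y, a cut separating x from y extends to cut all 3i path edges.  Gluing equivalence
   preserves this growth, so every G equivalent to K2 i has MaxCut(G + theta m 0) at least
   i plus the degree of x.  This fails for G = K2 j with j < i (the value is 2j), and for
   the output of a kernel of size f as soon as i > f(4)^2, since a graph on N vertices has
   maximum cut at most N^2. *)

Lemma sum_eq_mem (T : eqType) (a : T) (s : seq T) :
  uniq s -> \sum_(v <- s) (a == v) = (a \in s).
Proof.
move=> us; rewrite -big_mkcond sum1_count -count_uniq_mem //.
by apply: eq_count => v; rewrite eq_sym.
Qed.

Lemma leq_sum_sub_uniq (s s' : seq nat) (F : nat -> nat) :
  uniq s -> uniq s' -> {subset s <= s'} -> \sum_(v <- s) F v <= \sum_(v <- s') F v.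
Proof. exact: (uniq_sub_le_big (op := addn) leqnn (fun a b => leq_addr b a)). Qed.

Lemma cut_value_le_maxcut G X : X `<=` gV G -> cut_value G X <= maxcut G.
Proof. by move=> sXV; apply: (leq_bigmax_seq X); rewrite ?fpowersetE. Qed.

Lemma maxcut_leq G n : (forall X, X `<=` gV G -> cut_value G X <= n) -> maxcut G <= n.
Proof. by move=> cutn; apply/bigmax_leqP_seq => X; rewrite fpowersetE => /cutn. Qed.

Lemma cut_value_le_crossing G X (E : seq (nat * nat)) :
    (forall u v, gadj G u v -> ((u, v) \in E) || ((v, u) \in E)) ->
  cut_value G X <= \sum_(e <- E) ((e.1 \in X) != (e.2 \in X)).
Proof.
move=> coverE; set W := gV G `\` X.
pose hits u v (e : nat * nat) := ((e == (u, v)) + (e == (v, u)))%N.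
have pair_sum a b : \sum_(u <- X) \sum_(v <- W) ((a, b) == (u, v)) = (a \in X) * (b \in W).
  rewrite -(sum_eq_mem a (fset_uniq X)) -(sum_eq_mem b (fset_uniq W)) big_distrl.
  apply: eq_bigr => u _; rewrite big_distrr; apply: eq_bigr => v _ /=.
  by rewrite xpair_eqE; case: (a == u); case: (b == v).
apply: (@leq_trans (\sum_(u <- X) \sum_(v <- W) \sum_(e <- E) hits u v e)).
  apply: leq_sum => u _; apply: leq_sum => v _.
  case adj_uv: (gadj G u v) => //; rewrite big_split -!big_mkcond !sum1_count /=.
  by case/orP: (coverE u v adj_uv); rewrite -has_pred1 has_count => /leq_trans->;
     rewrite ?leq_addr ?leq_addl.
rewrite (eq_bigr _ (fun u _ => exchange_big _ _ _ _ _ _)) exchange_big.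
apply: leq_sum => -[a b] _ /=.
rewrite (eq_bigr _ (fun u _ => big_split _ _ _ _ _)) big_split /= pair_sum.
under eq_bigr => u _ do under eq_bigr => v _ do rewrite xpair_eqE andbC -xpair_eqE.
rewrite pair_sum /W !in_fsetD.
by case: (a \in X); case: (b \in X); case: (a \in gV G); case: (b \in gV G).
Qed.

Lemma cut_value_ge_witnesses G X (l : seq nat) (w : nat -> seq nat) :
    uniq l -> {subset l <= X} ->
    (forall u, u \in l -> uniq (w u) /\
       forall v, v \in w u -> (v \in gV G `\` X) && gadj G u v) ->
  \sum_(u <- l) size (w u) <= cut_value G X.
Proof.
move=> ul sub_lX wP; apply: (@leq_trans (\sum_(u <- l) \sum_(v <- gV G `\` X) gadj G u v)).
  rewrite !big_seq; apply: leq_sum => u /wP[uw wuP].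
  rewrite -sum1_size; apply: (@leq_trans (\sum_(v <- w u) gadj G u v)).
    by rewrite !big_seq; apply: leq_sum => v /wuP /andP[_ ->].
  by apply: leq_sum_sub_uniq => // [|v /wuP /andP[]//]; apply: fset_uniq.
by apply: leq_sum_sub_uniq => //; apply: fset_uniq.
Qed.

Lemma maxcut_glue_ge G H : maxcut G <= maxcut (glue G H).
Proof.
apply: maxcut_leq => X sXG.
have sXGH : X `<=` gV (glue G H) by rewrite (fsubset_trans sXG) ?fsubsetUl.
apply: leq_trans (cut_value_le_maxcut sXGH); apply: leq_sum => u _.
apply: (@leq_trans (\sum_(v <- gV G `\` X) gadj (glue G H) u v)).
  by apply: leq_sum => v _ /=; case: (gadj G u v).
apply: leq_sum_sub_uniq; rewrite ?fset_uniq //.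
by apply/fsubsetP; rewrite fsetSD ?fsubsetUl.
Qed.

Lemma maxcut_le_card_sq G : maxcut G <= #|` gV G| ^ 2.
Proof.
apply: maxcut_leq => X sXG; apply: (@leq_trans (\sum_(u <- X) \sum_(v <- gV G `\` X) 1)).
  by apply: leq_sum => u _; apply: leq_sum => v _; case: (gadj G u v).
rewrite (eq_bigr (fun _ => 1 * size (gV G `\` X))) => [|u _]; last by rewrite sum1_size mul1n.
rewrite -big_distrl /= sum1_size.
by rewrite leq_mul // fsubset_leq_card ?fsubsetDl.
Qed.

Lemma glue_equiv_sym B G G' : glue_equiv B G G' -> glue_equiv B G' G.
Proof.
case=> D GG'; exists (- D)%R => H bH okG' okG.
by rewrite (GG' H bH okG okG') -GRing.addrA GRing.subrr GRing.addr0.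
Qed.

Definition names_below (G : graph) (m : nat) := forall v, v \in gV G -> v < m.

Lemma names_below_bigmax G n : names_below G ((\max_(v <- gV G) v).+1 + n).
Proof.
by move=> v vG; rewrite ltnS (leq_trans (leq_bigmax_seq (F := id) v vG isT)) ?leq_addr.
Qed.

Definition sym_graph (V : {fset nat}) (e : rel nat) := Graph V (fun u v => e u v || e v u).

Lemma wf_sym_graph V e : (forall u, ~~ e u u) ->
  (forall u v, e u v -> (u \in V) && (v \in V)) -> wf_graph (sym_graph V e).
Proof.
move=> e_irr eV; split=> [u v | u | u v] /=; first by rewrite orbC.
  by rewrite orbb e_irr.
by case/orP=> /eV; rewrite // andbC.
Qed.

Section TwoTerminals.
Variables x y : nat.
Hypothesis x_neq_y : x != y.
Let n0 := (x + y).+1.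

Definition K2_rel i u v := ((u == x) || (u == y)) && (n0 <= v < n0 + i).
Definition K2 i := sym_graph (seq_fset tt (x :: y :: iota n0 i)) (K2_rel i).

(* The t-th path is x, m + t, m + k + t, y. *)
Definition theta_rel m k u v :=
  [|| (u == x) && (m <= v < m + k),
      (m <= u < m + k) && (v == u + k)
    | (m + k <= u < m + k + k) && (v == y)].
Definition theta m k := sym_graph (seq_fset tt (x :: y :: iota m (k + k))) (theta_rel m k).

Lemma K2_boundaried i : bgraph [fset x; y] (K2 i) /\ edgeless_outside [fset x; y] (K2 i).
Proof.
split; last by move=> u v /orP[] /andP[/orP[] /eqP-> _]; rewrite !inE eqxx ?orbT.
split; last by apply/fsubsetP => v; rewrite !inE seq_fsetE !inE => /orP[]->; rewrite ?orbT.
apply: wf_sym_graph => [u | u v]; rewrite ?seq_fsetE ?inE ?mem_iota /K2_rel /n0; lia.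
Qed.

Lemma names_below_K2 i m : n0 + i <= m -> names_below (K2 i) m.
Proof. by move=> le_m v; rewrite seq_fsetE !inE mem_iota; move: le_m; rewrite /n0; lia. Qed.

Lemma theta_boundaried m k : x < m -> y < m -> bgraph [fset x; y] (theta m k).
Proof.
move=> xm ym; split; last first.
  by apply/fsubsetP => v; rewrite !inE seq_fsetE !inE => /orP[]->; rewrite ?orbT.
apply: wf_sym_graph => [u | u v]; rewrite ?seq_fsetE ?inE ?mem_iota /theta_rel; lia.
Qed.

Lemma glue_ok_theta G m k : names_below G m -> glue_ok [fset x; y] [fset x; y] G (theta m k).
Proof.
move=> Gm; apply/fsubsetP => v; rewrite !in_fsetI seq_fsetE !inE mem_iota.
by case/andP => /Gm; lia.
Qed.

Lemma boundary_below G m : bgraph [fset x; y] G -> names_below G m -> x < m /\ y < m.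
Proof. by case=> _ /fsubsetP sBG Gm; split; apply/Gm/sBG; rewrite !inE eqxx ?orbT. Qed.

Lemma maxcut_K2_ge i : 2 * i <= maxcut (K2 i).
Proof.
have sXV : [fset x; y] `<=` gV (K2 i).
  by apply/fsubsetP => v; rewrite seq_fsetE !inE => /orP[]->; rewrite ?orbT.
apply: leq_trans (cut_value_le_maxcut sXV).
have := @cut_value_ge_witnesses (K2 i) [fset x; y] [:: x; y] (fun _ => iota n0 i).
rewrite !big_cons big_nil size_iota addn0 mul2n -addnn; apply.
- by rewrite /= inE andbT.
- by move=> u; rewrite !inE.
move=> u; rewrite !inE => xy_u; split=> [|v]; first exact: iota_uniq.
by rewrite in_fsetD seq_fsetE !inE mem_iota /= /K2_rel /n0; lia.
Qed.

Lemma maxcut_theta_ge G m k (ex : seq nat) :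
    bgraph [fset x; y] G -> names_below G m -> uniq ex -> all (gadj G x) ex ->
  size ex + 3 * k <= maxcut (glue G (theta m k)).
Proof.
move=> bG Gm uex /allP x_ex; have [[_ G_irr G_edgeV] sBG] := bG.
have [xm ym] := boundary_below bG Gm.
have ex_nbr v : v \in ex -> [&& v \in gV G, v < m, v != x & gadj G x v].
  move=> /x_ex adj_xv; have /andP[_ vG] := G_edgeV x v adj_xv.
  by rewrite vG Gm // adj_xv andbT; apply: contraTneq adj_xv => ->.
(* x and the path vertices adjacent to y form one side, so every path edge is cut. *)
pose X : {fset nat} := seq_fset tt (x :: iota (m + k) k).
have sXV : X `<=` gV (glue G (theta m k)).
  apply/fsubsetP => v; rewrite in_fsetU !seq_fsetE !inE !mem_iota.
  by case/orP=> [/eqP-> | ?]; [rewrite (fsubsetP sBG) ?inE ?eqxx | rewrite orbC; lia].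
apply: leq_trans (cut_value_le_maxcut sXV).
have := @cut_value_ge_witnesses (glue G (theta m k)) X (x :: iota (m + k) k)
  (fun u => if u == x then ex ++ iota m k else [:: u - k; y]).
rewrite big_cons eqxx size_cat size_iota big_seq.
rewrite (eq_bigr (fun _ => 1 * 2)) => [|u]; last by rewrite mem_iota => u_b; rewrite ifN //; lia.
rewrite -big_distrl -big_seq sum1_size size_iota.
have -> : (size ex + k + k * 2 = size ex + 3 * k)%N by lia.
apply.
- by rewrite /= iota_uniq mem_iota andbT; lia.
- by move=> u; rewrite seq_fsetE.
move=> u; rewrite inE => /orP[/eqP-> | u_b]; rewrite ?eqxx.
  split=> [|v].
    rewrite cat_uniq uex iota_uniq andbT /=; apply/hasPn => v; rewrite mem_iota => v_a.
    by apply/negP => /ex_nbr; lia.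
  rewrite mem_cat => /orP[/ex_nbr | ].
    rewrite in_fsetD in_fsetU seq_fsetE !inE mem_iota /=; case/and4P => -> v_m v_x ->.
    by rewrite orTb /theta_rel; lia.
  rewrite in_fsetD in_fsetU !seq_fsetE !inE !mem_iota /= /theta_rel; lia.
move: u_b; rewrite mem_iota => u_b; rewrite ifN; last lia.
split=> [|v]; first by rewrite /= inE andbT; lia.
rewrite in_fsetD in_fsetU !seq_fsetE !inE !mem_iota /= /theta_rel; lia.
Qed.

Lemma maxcut_K2_theta_le i m k : k <= i -> maxcut (glue (K2 i) (theta m k)) <= 2 * i + 2 * k.
Proof.
move=> le_ki; apply: maxcut_leq => X _.
pose leaf t := [:: (x, n0 + t); (y, n0 + t)].
pose path t := [:: (x, m + t); (m + t, m + t + k); (m + t + k, y)].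
pose E := flatten [seq leaf t ++ path t | t <- index_iota 0 k]
       ++ flatten [seq leaf t | t <- index_iota k i].
have cover u v : gadj (glue (K2 i) (theta m k)) u v -> ((u, v) \in E) || ((v, u) \in E).
  have Ecover a b : K2_rel i a b || theta_rel m k a b -> (a, b) \in E.
    rewrite /E /leaf /path mem_cat /K2_rel /theta_rel => /orP[K2ab | ].
      case: (ltnP (b - n0) k) => bk; apply/orP; [left | right]; apply/flatten_mapP;
        exists (b - n0); rewrite ?mem_index_iota ?mem_cat ?inE ?xpair_eqE;
        move: K2ab; rewrite /n0; lia.
    case/or3P=> [ab | ab | ab]; apply/orP; left; apply/flatten_mapP;
      [exists (b - m) | exists (a - m) | exists (a - m - k)];
      rewrite ?mem_index_iota ?mem_cat ?inE ?xpair_eqE; lia.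
  by case/orP=> /orP[] uv; apply/orP; [left | right | left | right]; apply: Ecover; rewrite uv ?orbT.
apply: leq_trans (cut_value_le_crossing X cover) _.
rewrite big_cat !big_flatten !big_map /=.
apply: (@leq_trans (\sum_(0 <= t < k) 4 + \sum_(k <= t < i) 2)); last first.
  by rewrite !sum_nat_const_nat; lia.
(* [leaf t ++ path t] is the 5-cycle x, n0 + t, y, m + t + k, m + t, and a cut meets
   an odd cycle in at most 4 edges. *)
apply: leq_add; apply: leq_sum => t _; rewrite /leaf /path /= !big_cons big_nil /=.
  by case: (x \in X); case: (y \in X); case: (n0 + t \in X); case: (m + t \in X);
     case: (m + t + k \in X).
by case: (x \in X); case: (y \in X); case: (n0 + t \in X).
Qed.

Lemma K2_offset_maxcut_ge G i m (ex : seq nat) (D : int) :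
    bgraph [fset x; y] G -> names_below G m -> uniq ex -> all (gadj G x) ex ->
    Posz (maxcut (glue (K2 i) (theta m 0))) = (Posz (maxcut (glue G (theta m 0))) + D)%R ->
    Posz (maxcut (glue (K2 i) (theta m i))) = (Posz (maxcut (glue G (theta m i))) + D)%R ->
  i + size ex <= maxcut (glue G (theta m 0)).
Proof.
move=> bG Gm uex x_ex offset0 offseti.
have K2_theta0_ge := leq_trans (maxcut_K2_ge i) (maxcut_glue_ge (K2 i) (theta m 0)).
have K2_thetai_le := maxcut_K2_theta_le m (leqnn i).
have G_thetai_ge := maxcut_theta_ge i bG Gm uex x_ex.
lia.
Qed.

Lemma K2_not_equiv i j : j < i -> ~ glue_equiv [fset x; y] (K2 i) (K2 j).
Proof.
move=> lt_ji [D equivD]; pose m := n0 + i.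
have [bKj _] := K2_boundaried j.
have Kj_m : names_below (K2 j) m by apply: names_below_K2; rewrite leq_add2l ltnW.
have Ki_m : names_below (K2 i) m by apply: names_below_K2.
have [xm ym] := boundary_below bKj Kj_m.
have offset k := equivD (theta m k) (theta_boundaried k xm ym)
  (glue_ok_theta k Ki_m) (glue_ok_theta k Kj_m).
have x_leaves : all (gadj (K2 j) x) (iota n0 j).
  by apply/allP => v; rewrite mem_iota /= /K2_rel eqxx => ->.
have := K2_offset_maxcut_ge bKj Kj_m (iota_uniq _ _) x_leaves (offset 0) (offset i).
have := maxcut_K2_theta_le m (leq0n j).
rewrite size_iota; lia.
Qed.

Lemma no_bd_kernel f K : ~ bd_kernel f K.
Proof.
move=> kernelK; pose N := f (#|` [fset x; y]| + #|` [fset x; y]|); pose i := (N ^ 2).+1.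
have [bKi x_y_cover] := K2_boundaried i.
have := kernelK _ (K2 i) _ bKi (conj bKi.2 x_y_cover).
case: (K _ (K2 i) _) => [[G' s'] D] [bG' _ card_G' _ equivD].
pose m := (\max_(v <- gV G') v).+1 + (n0 + i).
have G'm : names_below G' m by apply: names_below_bigmax.
have Ki_m : names_below (K2 i) m by apply: names_below_K2; rewrite leq_addl.
have [xm ym] := boundary_below bG' G'm.
have offset k := equivD (theta m k) (theta_boundaried k xm ym)
  (glue_ok_theta k Ki_m) (glue_ok_theta k G'm).
have := K2_offset_maxcut_ge bG' G'm (isT : uniq [::]) isT (offset 0) (offset i).
have : maxcut (glue G' (theta m 0)) <= N ^ 2.
  apply: leq_trans (maxcut_le_card_sq _) _; rewrite leq_exp2r //.
  apply: leq_trans card_G'; apply: fsubset_leq_card; apply/fsubsetP => v.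
  by case/fsetUP => //; rewrite seq_fsetE /= !inE => xy_v; apply: (fsubsetP bG'.2); rewrite !inE.
rewrite /= /i; lia.
Qed.
End TwoTerminals.

Theorem mainTheorem11 (x y : nat) : x <> y ->
  (exists Gs : nat -> graph,
     (forall i, bgraph [fset x; y] (Gs i) /\ edgeless_outside [fset x; y] (Gs i)) /\
     (forall i j, i <> j -> ~ glue_equiv [fset x; y] (Gs i) (Gs j)))
  /\
  (forall (f : nat -> nat)
     (K : {fset nat} -> graph -> {fset nat} -> graph * {fset nat} * int),
     ~ bd_kernel f K).
Proof.
move=> /eqP x_neq_y; split=> [|f K]; last exact: (no_bd_kernel x_neq_y).
exists (K2 x y); split=> [i | i j /eqP]; first exact: K2_boundaried.
rewrite neq_ltn => /orP[lt_ij | lt_ji]; last exact: K2_not_equiv.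
by move/glue_equiv_sym; apply: K2_not_equiv.
Qed.
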